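(* Let $S_1,\ldots,S_m$ be propositional formulae ($m\ge 1$). The lexicographic orders $[S_1,\ldots,S_{m-1},S_m]$ and $[S_1,\ldots,S_{m-1}]$ are equivalent if and only if $S_m$ is equivalent to the disjunction of some (possibly none) of the formulae $Q = (B_1 \equiv S_1) \wedge \cdots \wedge (B_{m-1} \equiv S_{m-1})$, where each $B_i$ is either $\top$ or $\bot$.
   Context: Formulae are propositional over a finite alphabet; models are truth assignments. For a formula $F$, the order induced by $F$ is: $I \leq_F J$ iff $I \models F$ or $J \not\models F$. For a finite sequence of formulae $S=[S_1,\ldots,S_m]$, the lexicographic order $\leq_S$ is defined recursively: $I \leq_S J$ holds iff either $S=[]$, or ($I \leq_{S_1} J$ and (either $J \not\leq_{S_1} I$ or $I \leq_R J$)), where $R=[S_2,\ldots,S_m]$. Two sequences $S$ and $R$ are equivalent, written $S\equiv R$, if $I \leq_S J$ and $I\leq_R J$ coincide for all pairs of models $I,J$. The empty disjunction is $\bot$. *)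

From mathcomp Require Import all_boot.
Set Implicit Arguments. Unset Strict Implicit. Unset Printing Implicit Defensive.

Inductive formula (A : Type) : Type :=
| FVar of A
| FTop
| FBot
| FNeg of formula A
| FAnd of formula A & formula A
| FOr of formula A & formula A
| FImp of formula A & formula A
| FIff of formula A & formula A.
Arguments FTop {A}. Arguments FBot {A}.

Fixpoint eval (A : Type) (I : A -> bool) (F : formula A) : bool :=
  match F with
  | FVar a => I a
  | FTop => true
  | FBot => false
  | FNeg G => ~~ eval I G
  | FAnd G H => eval I G && eval I H
  | FOr G H => eval I G || eval I H
  | FImp G H => eval I G ==> eval I H
  | FIff G H => eval I G == eval I H
  end.

Definition fequiv (A : Type) (F G : formula A) : Prop :=
  forall I : A -> bool, eval I F = eval I G.

Definition leF (A : Type) (F : formula A) (I J : A -> bool) : bool :=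
  eval I F || ~~ eval J F.

Fixpoint leS (A : Type) (S : seq (formula A)) (I J : A -> bool) : bool :=
  match S with
  | [::] => true
  | F :: R => leF F I J && (~~ leF F J I || leS R I J)
  end.

Definition sequiv (A : Type) (S R : seq (formula A)) : Prop :=
  forall I J : A -> bool, leS S I J = leS R I J.

Definition bigOr (A : Type) (l : seq (formula A)) : formula A := foldr (@FOr A) FBot l.
Definition bigAnd (A : Type) (l : seq (formula A)) : formula A := foldr (@FAnd A) FTop l.

Definition constF (A : Type) (b : bool) : formula A := if b then FTop else FBot.

Definition Qform (A : Type) (S : seq (formula A)) (B : seq bool) : formula A :=
  bigAnd [seq FIff (constF A p.1) p.2 | p <- zip B S].

(* Appending S_m leaves the lexicographic order unchanged exactly when S_m
   never breaks a tie between models that S_1, ..., S_{m-1} cannot separate,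
   i.e. when the truth value of S_m depends only on the vector of truth values
   of S_1, ..., S_{m-1}.  Since Q_B holds precisely at the models with vector
   B, such formulae are exactly the disjunctions of Q_B's: take one Q_B for
   the vector of each model of S_m. *)
From mathcomp Require Import all_boot.

Set Implicit Arguments.
Unset Strict Implicit.
Unset Printing Implicit Defensive.

Definition profile (A : Type) (S : seq (formula A)) (I : A -> bool) : seq bool :=
  map (eval I) S.

Definition profile_determined (A : Type) (S : seq (formula A)) (F : formula A) : Prop :=
  forall I J : A -> bool, profile S I = profile S J -> eval I F = eval J F.

Lemma eq_eval (A : Type) (I J : A -> bool) (F : formula A) :
  I =1 J -> eval I F = eval J F.
Proof. by move=> eIJ; elim: F => /= [a|||G ->|G -> H ->|G -> H ->|G -> H ->|G -> H ->]. Qed.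

Lemma eval_bigOr (A : Type) (l : seq (formula A)) (I : A -> bool) :
  eval I (bigOr l) = has (eval I) l.
Proof. by elim: l => //= F l ->. Qed.

Lemma eval_Qform (A : Type) (S : seq (formula A)) (B : seq bool) (I : A -> bool) :
  size B = size S -> eval I (Qform S B) = (profile S I == B).
Proof.
elim: S B => [|G S IH] [|b B] //= [sizeB].
rewrite /Qform /= -/(Qform S B) IH // eqseq_cons.
by case: b; case: (eval I G).
Qed.

Lemma leS_rcons (A : Type) (S : seq (formula A)) (F : formula A) (I J : A -> bool) :
  leS (rcons S F) I J =
  if profile S I == profile S J then leF F I J else leS S I J.
Proof.
elim: S => [|G S IH] /=; first by rewrite /leF; case: (eval I F); case: (eval J F).
rewrite eqseq_cons IH /leF.
by case: (eval I G); case: (eval J G); case: (_ == _).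
Qed.

Lemma leS_eq_profile (A : Type) (S : seq (formula A)) (I J : A -> bool) :
  profile S I = profile S J -> leS S I J.
Proof.
elim: S => [|G S IH] //= [eG /IH ->]; rewrite /leF eG.
by case: (eval J G); rewrite ?orbT.
Qed.

Lemma sequiv_rcons_profile (A : Type) (S : seq (formula A)) (F : formula A) :
  sequiv (rcons S F) S <-> profile_determined S F.
Proof.
split=> [eqS I J eIJ | F_profile I J].
- have leF_on_ties K L : profile S K = profile S L -> leF F K L.
    by move=> eKL; have := eqS K L; rewrite leS_rcons eKL eqxx leS_eq_profile.
  move: (leF_on_ties I J eIJ) (leF_on_ties J I (esym eIJ)); rewrite /leF.
  by case: (eval I F); case: (eval J F).
- rewrite leS_rcons; case: eqP => // eIJ.
  by rewrite leS_eq_profile // /leF (F_profile I J eIJ) orbN.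
Qed.

Lemma bigOr_Qform_profile (A : finType) (S : seq (formula A)) (F : formula A) :
  (exists Bs : seq ((size S).-tuple bool),
     fequiv F (bigOr [seq Qform S (tval B) | B <- Bs])) <->
  profile_determined S F.
Proof.
split=> [[Bs eqF] I J eIJ | F_profile].
  rewrite !eqF !eval_bigOr !has_map; apply: eq_has => B /=.
  by rewrite !eval_Qform ?size_tuple // eIJ.
pose profile_tuple (I : A -> bool) : (size S).-tuple bool := map_tuple (eval I) (in_tuple S).
exists [seq profile_tuple f | f : {ffun A -> bool} <- enum {ffun A -> bool} & eval f F].
move=> I; rewrite eval_bigOr !has_map; apply/idP/hasP => [FI | [f]].
- have eI : I =1 [ffun a => I a] by move=> a; rewrite ffunE.
  exists [ffun a => I a].
    by rewrite mem_filter mem_enum andbT -(eq_eval _ eI).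
  rewrite /= eval_Qform ?size_map //.
  by apply/eqP/eq_map => G; apply: eq_eval.
- rewrite mem_filter => /andP[Ff _] /=.
  by rewrite eval_Qform ?size_map // => /eqP /F_profile ->.
Qed.

Theorem theorem3 (A : finType) (S : seq (formula A)) (Sm : formula A) :
  sequiv (rcons S Sm) S <->
  exists Bs : seq ((size S).-tuple bool),
    fequiv Sm (bigOr [seq Qform S (tval B) | B <- Bs]).
Proof.
exact: iff_trans (sequiv_rcons_profile S Sm) (iff_sym (bigOr_Qform_profile S Sm)).
Qed.
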